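(* Assume vertex labels take values in $\{0,1\}^\ell$. Let $k\ge1$, let $\Omega$ be any collection of functions, let $\varphi\in\mathsf{TL}_k(\Omega)$ with free variables among $x_1,\dots,x_k$, and let $c\in\mathbb R$. Then there is a formula $\tilde\varphi^c$ of $\mathsf C^k_{\infty\omega}$, of quantifier rank at most the summation depth of $\varphi$, such that for every graph $G$ and every $\mathbf v\in V_G^k$: $[\![\varphi]\!]^{\mathbf v}_G=c$ if and only if $\tilde\varphi^c$ is true in $G$ under $x_i\mapsto v_i$. Moreover, if $\varphi\in\mathsf{GTL}_2(\Omega)$ then $\tilde\varphi^c$ can be taken in $\mathsf{GC}_{\infty\omega}$.
   Context: Fix integers $n\ge1$, $\ell\ge1$. A graph is $G=(V_G,E_G,\mathrm{col}_G)$ with $V_G=[n]$, $E_G$ a set of unordered pairs of distinct vertices, and $\mathrm{col}_G:V_G\to\{0,1\}^\ell$. Tensor language: $\Omega$ a collection of functions $f:\mathbb R^p\to\mathbb R$. Expressions $\varphi::=\mathbf 1_{x=y}\mid \mathbf 1_{x\neq y}\mid E(x,y)\mid P_s(x)\mid \varphi\cdot\varphi\mid \varphi+\varphi\mid a\cdot\varphi\mid f(\varphi_1,\dots,\varphi_p)\mid \sum_x\varphi$, usual free variables ($\sum_x$ binds $x$); semantics: $E$ adjacency indicator, $P_s(x)=\mathrm{col}_G(\nu(x))_s$, $\mathbf 1_{x\,\mathrm{op}\,y}$ the (dis)equality indicator, $\cdot,+,a\cdot,f$ pointwise, $[\![\sum_x\varphi]\!]^\nu_G=\sum_{v\in V_G}[\![\varphi]\!]^{\nu[x\mapsto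 v]}_G$. Summation depth: $0$ for atoms, max for $\cdot,+,f(\dots)$, unchanged by $a\cdot$, $+1$ for $\sum_x$. $\mathsf{TL}_k(\Omega)$: expressions using only variables $x_1,\dots,x_k$ (re-binding allowed). Guarded fragment $\mathsf{GTL}_2(\Omega)$: expressions with exactly one free variable ($x_1$ or $x_2$), built from $\mathbf 1_{x_i=x_i}$, $\mathbf 1_{x_i\ne x_i}$, $P_s(x_i)$ by $\cdot$, $+$ of expressions with the same single free variable, $a\cdot$, $f(\varphi_1,\dots,\varphi_p)$ with all $\varphi_j$ sharing the same single free variable, and $\sum_{x_j}(E(x_i,x_j)\cdot\varphi)$ with $\{i,j\}=\{1,2\}$, $\varphi$ with free variable $x_j$. Infinitary counting logic $\mathsf C^k_{\infty\omega}$: formulas over variables $x_1,\dots,x_k$ given by $\varphi::=(x_i=x_j)\mid E(x_i,x_j)\mid P_s(x_i)\mid\neg\varphi\mid\varphi\wedge\varphi\mid\exists^{\ge m}x_i\,\varphi\mid\bigvee_{\alpha\in A}\varphi_\alpha\mid\bigwedge_{\alpha\in A}\varphi_\alpha$ with arbitrary (possibly uncountable) index sets $A$. Truth under a valuation $\mu$: $(x_i=x_j)$ iff $\mu(x_i)=\mu(x_j)$; $E(x_i,x_j)$ iff $\mu(x_i)\mu(x_j)\in E_G$; $P_s(x_i)$ iff $\mathrm{col}_G(\mu(x_i))_s=1$; $\exists^{\ge m}x_i\varphi$ iff at least $m$ vertices $v$ satisfy $\varphi$ under $\mu[x_i\mapsto v]$; infinitary $\bigvee$/$\bigwedge$ as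 some/all. Quantifier rank: nesting depth of counting quantifiers (supremum over infinitary connectives). The guarded fragment $\mathsf{GC}_{\infty\omega}$ (over $x_1,x_2$): equality atoms only of the form $x_i=x_i$; components of $\wedge$, $\bigvee$, $\bigwedge$ have the same single free variable; counting quantifiers only in the forms $\exists^{\ge m}x_2(E(x_1,x_2)\wedge\varphi(x_2))$ or $\exists^{\ge m}x_1(E(x_2,x_1)\wedge\varphi(x_1))$. *)

From HB Require Import structures.
From mathcomp Require Import all_boot all_order all_algebra.
From Stdlib Require Import Reals.
From mathcomp Require Import Rstruct.

Set Implicit Arguments.
Unset Strict Implicit.
Unset Printing Implicit Defensive.

Import GRing.Theory.
Local Open Scope ring_scope.

Record graph (n l : nat) := Graph {
  adj : rel 'I_n;
  adj_sym : symmetric adj;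
  adj_irr : irreflexive adj;
  col : 'I_n -> 'I_l -> bool
}.

(* valuation update nu[x |-> v]; variables x_1..x_k are 'I_k (0-based) *)
Definition upd {k n : nat} (nu : 'I_k -> 'I_n) (x : 'I_k) (v : 'I_n)
  : 'I_k -> 'I_n := fun j => if j == x then v else nu j.

Inductive tl (l k : nat) : Type :=
| TEq   (x y : 'I_k)
| TNeq  (x y : 'I_k)
| TE    (x y : 'I_k)
| TP    (s : 'I_l) (x : 'I_k)
| TMul  (phi psi : tl l k)
| TAdd  (phi psi : tl l k)
| TScale (a : R) (phi : tl l k)
| TApp  (p : nat) (f : ('I_p -> R) -> R) (args : 'I_p -> tl l k)
| TSum  (x : 'I_k) (phi : tl l k).

Arguments TEq {l k}. Arguments TNeq {l k}. Arguments TE {l k}.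
Arguments TP {l k}. Arguments TMul {l k}. Arguments TAdd {l k}.
Arguments TScale {l k}. Arguments TApp {l k p}. Arguments TSum {l k}.

Definition fcollection := forall p : nat, (('I_p -> R) -> R) -> Prop.

Fixpoint usesOmega {l k} (Om : fcollection) (phi : tl l k) : Prop :=
  match phi with
  | TEq _ _ | TNeq _ _ | TE _ _ | TP _ _ => True
  | TMul a b | TAdd a b => usesOmega Om a /\ usesOmega Om b
  | TScale _ a | TSum _ a => usesOmega Om a
  | TApp p f args => Om p f /\ forall j, usesOmega Om (args j)
  end.

Fixpoint tl_eval {n l k} (G : graph n l) (nu : 'I_k -> 'I_n) (phi : tl l k)
  : R :=
  match phi with
  | TEq x y => if nu x == nu y then 1 else 0
  | TNeq x y => if nu x != nu y then 1 else 0
  | TE x y => if adj G (nu x) (nu y) then 1 else 0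
  | TP s x => if col G (nu x) s then 1 else 0
  | TMul a b => tl_eval G nu a * tl_eval G nu b
  | TAdd a b => tl_eval G nu a + tl_eval G nu b
  | TScale c a => c * tl_eval G nu a
  | TApp p f args => f (fun j => tl_eval G nu (args j))
  | TSum x a => \sum_(v : 'I_n) tl_eval G (upd nu x v) a
  end.

Fixpoint sdepth {l k} (phi : tl l k) : nat :=
  match phi with
  | TEq _ _ | TNeq _ _ | TE _ _ | TP _ _ => 0
  | TMul a b | TAdd a b => maxn (sdepth a) (sdepth b)
  | TScale _ a => sdepth a
  | TApp p f args => \max_(j < p) sdepth (args j)
  | TSum _ a => (sdepth a).+1
  end.

(* Guarded fragment GTL_2: gtl2 i phi  <->  phi \in GTL_2 with the single
   free variable x_i. *)
Inductive gtl2 {l : nat} : 'I_2 -> tl l 2 -> Prop :=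
| G_eq i : gtl2 i (TEq i i)
| G_neq i : gtl2 i (TNeq i i)
| G_P i s : gtl2 i (TP s i)
| G_mul i a b : gtl2 i a -> gtl2 i b -> gtl2 i (TMul a b)
| G_add i a b : gtl2 i a -> gtl2 i b -> gtl2 i (TAdd a b)
| G_scale i c a : gtl2 i a -> gtl2 i (TScale c a)
| G_app i (p : nat) (f : ('I_p -> R) -> R) (args : 'I_p -> tl l 2) : (forall j, gtl2 i (args j)) -> gtl2 i (TApp f args)
| G_sum i j a : i != j -> gtl2 j a -> gtl2 i (TSum j (TMul (TE i j) a)).

Inductive cform (l k : nat) : Type :=
| CEq  (i j : 'I_k)
| CE   (i j : 'I_k)
| CP   (s : 'I_l) (i : 'I_k)
| CNot (phi : cform l k)
| CAnd (phi psi : cform l k)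
| CEx  (m : nat) (i : 'I_k) (phi : cform l k)
| CBigOr  (A : Type) (phis : A -> cform l k)
| CBigAnd (A : Type) (phis : A -> cform l k).

Arguments CEq {l k}. Arguments CE {l k}. Arguments CP {l k}.
Arguments CNot {l k}. Arguments CAnd {l k}. Arguments CEx {l k}.
Arguments CBigOr {l k A}. Arguments CBigAnd {l k A}.

Fixpoint holds {n l k} (G : graph n l) (mu : 'I_k -> 'I_n) (phi : cform l k)
  : Prop :=
  match phi with
  | CEq i j => mu i = mu j
  | CE i j => adj G (mu i) (mu j)
  | CP s i => col G (mu i) s
  | CNot a => ~ holds G mu a
  | CAnd a b => holds G mu a /\ holds G mu b
  | CEx m i a => exists S : {set 'I_n},
      leq m #|S| /\ forall v, v \in S -> holds G (upd mu i v) a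
  | CBigOr A phis => exists x : A, holds G mu (phis x)
  | CBigAnd A phis => forall x : A, holds G mu (phis x)
  end.

(* "quantifier rank of phi is at most d" (the quantifier rank of an
   infinitary connective is the supremum over its components) *)
Fixpoint qrank_le {l k} (phi : cform l k) (d : nat) : Prop :=
  match phi with
  | CEq _ _ | CE _ _ | CP _ _ => True
  | CNot a => qrank_le a d
  | CAnd a b => qrank_le a d /\ qrank_le b d
  | CEx _ _ a => leq 1 d /\ qrank_le a d.-1
  | CBigOr _ phis | CBigAnd _ phis => forall x, qrank_le (phis x) d
  end.

(* Guarded fragment GC_{infty omega}: gc i phi <-> phi is a guarded formula
   with the single free variable x_i. *)
Inductive gc {l : nat} : 'I_2 -> cform l 2 -> Prop :=
| GC_eq i : gc i (CEq i i)
| GC_P i s : gc i (CP s i)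
| GC_not i a : gc i a -> gc i (CNot a)
| GC_and i a b : gc i a -> gc i b -> gc i (CAnd a b)
| GC_or i A (phis : A -> cform l 2) :
    (forall x, gc i (phis x)) -> gc i (CBigOr phis)
| GC_bigand i A (phis : A -> cform l 2) :
    (forall x, gc i (phis x)) -> gc i (CBigAnd phis)
| GC_ex i j m a : i != j -> gc j a -> gc i (CEx m j (CAnd (CE i j) a)).

From HB Require Import structures.
From mathcomp Require Import all_boot all_order all_algebra.
From Stdlib Require Import Reals.
From mathcomp Require Import Rstruct.
From mathcomp Require Import zify.
From Stdlib Require Import FunctionalExtensionality.

(* For every target value c, an expression is translated into the infinitary
   disjunction over all ways of producing c from values of its immediate
   subexpressions.  A sum [\sum_x psi = c] becomes the disjunction, over all
   vertex-indexed families g with sum c, of "for every r <> 0 exactly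
   #{v | g v = r} vertices x satisfy psi = r"; only nonzero values need to be
   counted, which is what makes guarded sums stay guarded: for r <> 0,
   [E(x_i, x_j) * psi = r] holds iff [E(x_i, x_j) /\ psi = r]. *)

Set Implicit Arguments.
Unset Strict Implicit.
Unset Printing Implicit Defensive.
Import GRing.Theory.
Local Open Scope ring_scope.

Lemma sum_fibers (I : finType) (F : I -> R) (s : seq R) :
  uniq s -> (forall i, F i \in s) ->
  \sum_i F i = \sum_(r <- s) r *+ #|[set i | F i == r]|.
Proof.
move=> us sF; transitivity (\sum_i \sum_(r <- s) (if F i == r then r else 0)).
  apply: eq_bigr => i _; rewrite (bigD1_seq (F i)) //= eqxx big1 ?addr0 // => r.
  by rewrite eq_sym => /negbTE ->.
rewrite exchange_big; apply: eq_bigr => r _.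
rewrite -big_mkcond /= (eq_bigr (fun=> r)); last by move=> i /eqP.
by rewrite sumr_const cardsE.
Qed.

Lemma eq_sum_nonzero_fibers (I : finType) (F G : I -> R) :
  (forall r, r != 0 -> #|[set i | F i == r]| = #|[set i | G i == r]|) ->
  \sum_i F i = \sum_i G i.
Proof.
move=> eqFG; set s := undup (codom F ++ codom G).
have inF i : F i \in s by rewrite mem_undup mem_cat codom_f.
have inG i : G i \in s by rewrite mem_undup mem_cat codom_f orbT.
rewrite (sum_fibers (undup_uniq _) inF) (sum_fibers (undup_uniq _) inG).
apply: eq_bigr => r _; have [->|r0] := eqVneq r 0; first by rewrite !mul0rn.
by rewrite eqFG.
Qed.

Section Formulas.
Variables (n l k : nat).

Lemma qrank_le_mono (phi : cform l k) (d d' : nat) :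
  (d <= d')%nat -> qrank_le phi d -> qrank_le phi d'.
Proof.
elim: phi d d' => //= [a IHa b IHb|m i a IH|A phis IH|A phis IH] d d' le_dd'.
- by move=> [qa qb]; split; [apply: IHa qa|apply: IHb qb].
- by move=> [d_gt0 qa]; split; [lia|apply: IH qa; lia].
- by move=> q x; apply: IH (q x).
- by move=> q x; apply: IH (q x).
Qed.

Definition indicator_eq (A : cform l k) (c : R) : cform l k :=
  CBigOr (fun b : {b : bool | (if b then 1 else 0) = c} =>
            if sval b then A else CNot A).

Definition exactly (m : nat) (x : 'I_k) (psi : cform l k) : cform l k :=
  CAnd (CEx m x psi) (CNot (CEx m.+1 x psi)).

Definition value_of1 (f : R -> R) (F : R -> cform l k) (c : R) : cform l k :=
  CBigOr (fun r : {r : R | f r = c} => F (sval r)).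

Definition value_of2 (f : R -> R -> R) (F1 F2 : R -> cform l k) (c : R) :=
  CBigOr (fun p : {p : R * R | f p.1 p.2 = c} => CAnd (F1 (sval p).1) (F2 (sval p).2)).

Definition value_ofN (p : nat) (f : ('I_p -> R) -> R) (F : 'I_p -> R -> cform l k)
    (c : R) : cform l k :=
  CBigOr (fun w : {w : 'I_p -> R | f w = c} =>
            CBigAnd (fun j : 'I_p => F j (sval w j))).

Definition sum_value (x : 'I_k) (F : R -> cform l k) (c : R) : cform l k :=
  CBigOr (fun g : {g : 'I_n -> R | \sum_v g v = c} =>
    CBigAnd (fun r : {r : R | r != 0} =>
      exactly #|[set v | sval g v == sval r]| x (F (sval r)))).

Variables (G : graph n l) (mu : 'I_k -> 'I_n).

Lemma holds_indicator_eq (A : cform l k) (b : bool) (c : R) :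
  (holds G mu A <-> b) ->
  ((if b then 1 else 0) = c <-> holds G mu (indicator_eq A c)).
Proof.
move=> hA; split=> [bc|[[[] bc] /= hc]].
- by exists (exist _ b bc); case: b hA bc => hA _ /=; [apply/hA|move/hA].
- by rewrite -bc (proj1 hA hc).
- by case: b hA => hA //; case: hc; apply/hA.
Qed.

Lemma holds_exactly (m : nat) (x : 'I_k) (psi : cform l k) (P : pred 'I_n) :
  (forall v, holds G (upd mu x v) psi <-> P v) ->
  (holds G mu (exactly m x psi) <-> #|[set v | P v]| = m).
Proof.
move=> hP.
have holds_CEx m' : holds G mu (CEx m' x psi) <-> (m' <= #|[set v | P v]|)%nat.
  split=> [[S [leS hS]]|le_m'].
  - apply: leq_trans leS (subset_leq_card _).
    by apply/subsetP => v /hS /hP; rewrite inE.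
  - by exists [set v | P v]; split=> // v; rewrite inE => /hP.
split=> [[/holds_CEx ge_m gt_m]|<-].
  by apply/eqP; rewrite eqn_leq ge_m andbT leqNgt; apply/negP => /holds_CEx.
by split; [apply/holds_CEx|move/holds_CEx; rewrite ltnn].
Qed.

Lemma holds_value_of1 (f : R -> R) (F : R -> cform l k) (t c : R) :
  (forall r, t = r <-> holds G mu (F r)) ->
  (f t = c <-> holds G mu (value_of1 f F c)).
Proof.
move=> hF; split=> [ftc|[[r fr] /= /hF ->] //].
by exists (exist _ t ftc); apply/hF.
Qed.

Lemma holds_value_of2 (f : R -> R -> R) (F1 F2 : R -> cform l k) (t1 t2 c : R) :
  (forall r, t1 = r <-> holds G mu (F1 r)) ->
  (forall r, t2 = r <-> holds G mu (F2 r)) ->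
  (f t1 t2 = c <-> holds G mu (value_of2 f F1 F2 c)).
Proof.
move=> hF1 hF2; split=> [ftc|[[[r1 r2] fr] [/= /hF1 -> /hF2 ->]] //].
by exists (exist _ (t1, t2) ftc); split; [apply/hF1|apply/hF2].
Qed.

Lemma holds_value_ofN (p : nat) (f : ('I_p -> R) -> R)
    (F : 'I_p -> R -> cform l k) (t : 'I_p -> R) (c : R) :
  (forall j r, t j = r <-> holds G mu (F j r)) ->
  (f t = c <-> holds G mu (value_ofN f F c)).
Proof.
move=> hF; split=> [ftc|[[w fw] /= hw]].
  by exists (exist _ t ftc) => j; apply/hF.
by rewrite -fw; congr f; apply: functional_extensionality => j; apply/hF/hw.
Qed.

Lemma holds_sum_value (x : 'I_k) (F : R -> cform l k) (h : 'I_n -> R) (c : R) :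
  (forall r, r != 0 -> forall v, holds G (upd mu x v) (F r) <-> h v == r) ->
  (\sum_v h v = c <-> holds G mu (sum_value x F c)).
Proof.
move=> hF; split=> [hc|[[g gc] /= hg]].
  by exists (exist _ h hc) => -[r r0] /=; apply/(holds_exactly _ (hF r r0)).
rewrite -gc; apply: eq_sum_nonzero_fibers => r r0.
exact/(holds_exactly _ (hF r r0))/(hg (exist _ r r0)).
Qed.

End Formulas.

Definition guarded_body (l k : nat) (t : tl l k -> R -> cform l k)
    (a : tl l k) (r : R) : cform l k :=
  if a is TMul (TE y z) b then CAnd (CE y z) (t b r) else t a r.

Fixpoint value_formula (n l k : nat) (phi : tl l k) : R -> cform l k :=
  match phi with
  | TEq x y => indicator_eq (CEq x y)
  | TNeq x y => indicator_eq (CNot (CEq x y))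
  | TE x y => indicator_eq (CE x y)
  | TP s x => indicator_eq (CP s x)
  | TMul a b => value_of2 *%R (value_formula n a) (value_formula n b)
  | TAdd a b => value_of2 +%R (value_formula n a) (value_formula n b)
  | TScale a0 a => value_of1 ( *%R a0) (value_formula n a)
  | TApp p f args => value_ofN f (fun j => value_formula n (args j))
  | TSum x a => sum_value n x (guarded_body (@value_formula n l k) a)
  end.

Section Translation.
Variables (n l : nat).

Lemma holds_guarded_body k (G : graph n l) (mu : 'I_k -> 'I_n) (a : tl l k) (r : R) :
  r != 0 ->
  (holds G mu (guarded_body (@value_formula n l k) a r) <->
   holds G mu (value_formula n a r)).
Proof.
move=> r0; case: a => [||||[] y z b||||]; try reflexivity.
split=> [[yz hb]|[[[c1 c2] /= c12] [[[[] bc] hc] hb]]].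
- exists (exist _ (1, r) (mul1r r)); split=> //.
  by exists (exist (fun b : bool => (if b then 1 else 0) = 1) true erefl).
- by move: c12 bc hb hc => /= <- <-; rewrite mul1r.
- by move: r0; rewrite -c12 /= -bc mul0r eqxx.
Qed.

Lemma guarded_body_qrank k (a : tl l k) (d : nat) (r : R) :
  (forall c, qrank_le (value_formula n a c) d) ->
  qrank_le (guarded_body (@value_formula n l k) a r) d.
Proof.
case: a => [||||[] y z b||||]; try by intros; eauto.
by move=> qa; have [_ qb] := qa r (exist _ (1, r) (mul1r r)).
Qed.

Lemma holds_value_formula k (G : graph n l) (mu : 'I_k -> 'I_n) (phi : tl l k)
    (c : R) :
  tl_eval G mu phi = c <-> holds G mu (value_formula n phi c).
Proof.
elim: phi mu c => [x y|x y|x y|s x|a IHa b IHb|a IHa b IHb|a0 a IH|p f args IH|x a IH]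
  mu c /=.
- by apply: holds_indicator_eq => /=; split=> /eqP.
- by apply: holds_indicator_eq => /=; split=> [/eqP|/eqP].
- exact: holds_indicator_eq.
- exact: holds_indicator_eq.
- exact: holds_value_of2.
- exact: holds_value_of2.
- exact: holds_value_of1.
- exact: holds_value_ofN (fun j => IH j mu).
apply: holds_sum_value => r r0 v.
by split=> [/(holds_guarded_body _ _ _ r0)/IH ->|/eqP/IH/(holds_guarded_body _ _ _ r0)].
Qed.

Lemma value_formula_qrank k (phi : tl l k) (c : R) :
  qrank_le (value_formula n phi c) (sdepth phi).
Proof.
elim: phi c => [x y|x y|x y|s x|a IHa b IHb|a IHa b IHb|a0 a IH|p f args IH|x a IH] c /=;
  try by case=> b p /=; case: b p.
- by move=> w; split; [apply: qrank_le_mono (IHa _)|apply: qrank_le_mono (IHb _)];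
    rewrite ?leq_maxl ?leq_maxr.
- by move=> w; split; [apply: qrank_le_mono (IHa _)|apply: qrank_le_mono (IHb _)];
    rewrite ?leq_maxl ?leq_maxr.
- by case.
- by move=> w j; apply: qrank_le_mono (IH j _); exact: leq_bigmax.
- by move=> g r; split; split=> //; exact: guarded_body_qrank.
Qed.

Lemma value_formula_guarded (i : 'I_2) (phi : tl l 2) :
  gtl2 i phi -> forall c, gc i (value_formula n phi c).
Proof.
elim=> {i phi} /= [i|i|i s|i a b _ IHa _ IHb|i a b _ IHa _ IHb|i c0 a _ IH|i p f args _ IH
  |i j a ij _ IH] c; apply: GC_or.
- by case=> b p /=; case: b p => _; [exact: GC_eq|exact/GC_not/GC_eq].
- by case=> b p /=; case: b p => _; [exact/GC_not/GC_eq|exact/GC_not/GC_not/GC_eq].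
- by case=> b p /=; case: b p => _; [exact: GC_P|exact/GC_not/GC_P].
- by move=> w; apply: GC_and.
- by move=> w; apply: GC_and.
- by move=> w; apply: IH.
- by move=> w; apply: GC_bigand.
move=> g; apply: GC_bigand => r /=.
by apply: GC_and; [|apply: GC_not]; apply: GC_ex.
Qed.

End Translation.

Theorem mainTheorem14 (n l : nat) (hn : leq 1 n) (hl : leq 1 l) :
  (forall (k : nat) (hk : leq 1 k) (Om : fcollection) (phi : tl l k)
          (hphi : usesOmega Om phi) (c : R),
     exists psi : cform l k,
       qrank_le psi (sdepth phi) /\
       forall (G : graph n l) (v : 'I_k -> 'I_n),
         tl_eval G v phi = c <-> holds G v psi)
  /\
  (forall (Om : fcollection) (i : 'I_2) (phi : tl l 2)
          (hphi : usesOmega Om phi) (hg : gtl2 i phi) (c : R),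
     exists psi : cform l 2,
       gc i psi /\ qrank_le psi (sdepth phi) /\
       forall (G : graph n l) (v : 'I_2 -> 'I_n),
         tl_eval G v phi = c <-> holds G v psi).
Proof.
split=> [k _ _ phi _ c|_ i phi _ guarded c].
  exists (value_formula n phi c); split=> [|G v].
    exact: value_formula_qrank.
  exact: holds_value_formula.
exists (value_formula n phi c); split; first exact: value_formula_guarded.
split=> [|G v]; first exact: value_formula_qrank.
exact: holds_value_formula.
Qed.
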